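(* For all integers $K>t>1$, $$s\!\left(\binom{K}{t},\ K,\ \binom{K-1}{t-1}\right)=\frac{\binom{K}{t}(K-t)}{t+1}=\binom{K}{t+1}.$$
   Context: A placement delivery array $S$-PDA$(F,K,Z)$ is an $F\times K$ array $R=(r_{j,k})$, $1\le j\le F$, $1\le k\le K$, over a finite set $S$ such that: (1) each cell is either empty or contains an element of $S$; (2) each column contains exactly $Z$ empty cells; (3) each element of $S$ occurs at most once in each row and at most once in each column; (4) if two distinct nonempty cells satisfy $r_{j_1,k_1}=r_{j_2,k_2}=t\in S$, then the cells $r_{j_1,k_2}$ and $r_{j_2,k_1}$ are empty. For integers $F,K\ge1$, $0\le Z\le F$, define $s(F,K,Z)=\min\{|S| : \text{there exists an } S\text{-PDA}(F,K,Z)\}$. *)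

From mathcomp Require Import all_boot.
Set Implicit Arguments. Unset Strict Implicit. Unset Printing Implicit Defensive.

(* An S-PDA(F,K,Z): an F x K array whose cells are either empty (None)
   or contain an element of the finite set S (Some s). *)
Definition is_PDA (S : finType) (F K : nat) (Z : nat) (R : 'I_F -> 'I_K -> option S) : Prop :=
  (forall k : 'I_K, #|[set j : 'I_F | R j k == None]| = Z) /\
  (forall (j : 'I_F) (k1 k2 : 'I_K) (s : S),
      R j k1 = Some s -> R j k2 = Some s -> k1 = k2) /\
  (forall (j1 j2 : 'I_F) (k : 'I_K) (s : S),
      R j1 k = Some s -> R j2 k = Some s -> j1 = j2) /\
  (forall (j1 j2 : 'I_F) (k1 k2 : 'I_K) (s : S),
      (j1, k1) <> (j2, k2) -> R j1 k1 = Some s -> R j2 k2 = Some s ->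
      R j1 k2 = None /\ R j2 k1 = None).

Definition is_min_PDA_size (F K Z n : nat) : Prop :=
  (exists R : 'I_F -> 'I_K -> option 'I_n, is_PDA Z R) /\
  (forall (S : finType) (R : 'I_F -> 'I_K -> option S), is_PDA Z R -> n <= #|S|).

(* Upper bound: index the rows by the t-subsets A of the K columns and fill
   cell (A, k), for k \notin A, with the (t+1)-subset k |: A.  Two cells
   (A1, k1) <> (A2, k2) carry the same symbol exactly when k2 \in A1 and
   k1 \in A2, which is condition (4).
   Lower bound: if a symbol occurs g times and one occurrence lies in a row
   with h empty cells, then g <= h + 1.  Weighting each filled cell of row j
   by 2t + 1 - h_j, the occurrences of one symbol weigh at most
   g (2t + 2 - g) <= (t + 1)^2, while the whole array weighs
   sum_j (2t + 1 - h_j) (K - h_j) >= F (K - t) (t + 1) by convexity, since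
   sum_j h_j = K Z = t F. *)

From mathcomp Require Import all_boot all_order all_algebra ring zify.
Set Implicit Arguments.
Unset Strict Implicit.
Unset Printing Implicit Defensive.
Import Order.TTheory GRing.Theory Num.Theory.

Lemma is_PDA_omap (S S' : finType) (F K Z : nat) (R : 'I_F -> 'I_K -> option S)
    (A : {pred S}) (f : S -> S') :
  (forall j k s, R j k = Some s -> s \in A) -> {in A &, injective f} ->
  is_PDA Z R -> is_PDA Z (fun j k => omap f (R j k)).
Proof.
move=> RA f_inj [holes [row [col cross]]].
have omap_Some j k s' : omap f (R j k) = Some s' ->
    exists2 s, R j k = Some s & s' = f s.
  by case: (R j k) => //= s [<-]; exists s.
have f_inj_range j1 k1 j2 k2 s1 s2 : R j1 k1 = Some s1 -> R j2 k2 = Some s2 ->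
    f s1 = f s2 -> s1 = s2.
  by move=> R1 R2; apply: f_inj; [apply: RA R1 | apply: RA R2].
split.
  by move=> k; rewrite -(holes k); apply: eq_card => j; rewrite !inE; case: (R j k).
split.
  move=> j k1 k2 _ /omap_Some [s1 R1 ->] /omap_Some [s2 R2].
  move/(f_inj_range _ _ _ _ _ _ R1 R2) => e.
  by subst s2; apply: row R1 R2.
split.
  move=> j1 j2 k _ /omap_Some [s1 R1 ->] /omap_Some [s2 R2].
  move/(f_inj_range _ _ _ _ _ _ R1 R2) => e.
  by subst s2; apply: col R1 R2.
move=> j1 j2 k1 k2 _ ne /omap_Some [s1 R1 ->] /omap_Some [s2 R2].
move/(f_inj_range _ _ _ _ _ _ R1 R2) => e.
by subst s2; have [-> ->] := cross _ _ _ _ _ ne R1 R2.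
Qed.

Lemma card_draws_mem (T : finType) (x : T) (t : nat) : 0 < t ->
  #|[set B : {set T} | (#|B| == t) && (x \in B)]| = 'C(#|T|.-1, t.-1).
Proof.
move=> t_gt0; set D := [set B | _].
have inj : {in D &, injective (fun B => B :\ x)}.
  move=> B1 B2; rewrite !inE => /andP [_ xB1] /andP [_ xB2] e.
  by rewrite -(setD1K xB1) -(setD1K xB2) e.
rewrite -(card_in_imset inj) -(cardsC1 x) -cards_draws; congr #|pred_of_set _|.
apply/setP => B; rewrite inE; apply/imsetP/andP => [[B' HB' ->]|[/subsetP sB /eqP cB]].
  move: HB'; rewrite inE (cardsD1 x) => /andP [/eqP <- xB'].
  rewrite xB' add1n; split=> //; apply/subsetP => y.
  by rewrite in_setD1 in_setC1 => /andP [].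
have xB : x \notin B by apply/negP => /sB; rewrite in_setC1 eqxx.
exists (x |: B); last by rewrite setU1K.
by rewrite inE cardsU1 xB cB setU11 add1n prednK ?eqxx.
Qed.

Lemma setU1_eq_notin (T : finType) (a b : T) (A B : {set T}) :
  a \notin A -> b \notin B -> a |: A = b |: B ->
  if a == b then A = B else b \in A /\ a \in B.
Proof.
move=> aA bB e; case: eqVneq => [eab|ab].
  by subst b; rewrite -(setU1K aA) -(setU1K bB) e.
split.
  by have := setU11 b B; rewrite -e in_setU1 eq_sym (negbTE ab).
by have := setU11 a A; rewrite e in_setU1 (negbTE ab).
Qed.

Lemma card_draws_ord (K t : nat) : #|[set A : {set 'I_K} | #|A| == t]| = 'C(K, t).
Proof. by rewrite card_draws card_ord. Qed.

Section UnionArray.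
Variables (K t : nat).

Definition subset_row (j : 'I_'C(K, t)) : {set 'I_K} :=
  enum_val (cast_ord (esym (card_draws_ord K t)) j).

Definition union_array (j : 'I_'C(K, t)) (k : 'I_K) : option {set 'I_K} :=
  if k \in subset_row j then None else Some (k |: subset_row j).

Lemma card_subset_row j : #|subset_row j| = t.
Proof.
by have := enum_valP (cast_ord (esym (card_draws_ord K t)) j); rewrite inE => /eqP.
Qed.

Lemma subset_row_inj : injective subset_row.
Proof. by move=> j1 j2 /enum_val_inj /cast_ord_inj. Qed.

Lemma subset_row_onto (A : {set 'I_K}) : #|A| = t -> exists j, subset_row j = A.
Proof.
move=> cA; have At : A \in [set A : {set 'I_K} | #|A| == t] by rewrite inE cA.
by exists (cast_ord (card_draws_ord K t) (enum_rank_in At A));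
  rewrite /subset_row cast_ordK enum_rankK_in.
Qed.

Lemma union_array_Some j k U :
  union_array j k = Some U -> k \notin subset_row j /\ U = k |: subset_row j.
Proof. by rewrite /union_array; case: ifP => // /negbT kA [<-]. Qed.

Lemma union_array_card j k U :
  union_array j k = Some U -> U \in [set A : {set 'I_K} | #|A| == t.+1].
Proof. by case/union_array_Some => kA ->; rewrite inE cardsU1 kA card_subset_row. Qed.

Lemma union_array_PDA : 0 < t -> is_PDA 'C(K.-1, t.-1) union_array.
Proof.
move=> t_gt0; split.
  move=> k; rewrite -[K in 'C(K.-1, _)]card_ord -(card_draws_mem k t_gt0).
  have -> : [set j | union_array j k == None] = [set j | k \in subset_row j].
    by apply/setP => j; rewrite !inE /union_array; case: ifP.
  rewrite -(card_in_imset (in2W subset_row_inj)); congr #|pred_of_set _|.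
  apply/setP => A; rewrite inE; apply/imsetP/andP => [[j kj ->]|[/eqP cA kA]].
    by rewrite inE in kj; rewrite card_subset_row.
  by have [j ej] := subset_row_onto cA; subst A; exists j; rewrite ?inE.
split.
  move=> j k1 k2 _ /union_array_Some [k1A ->] /union_array_Some [k2A].
  move/(setU1_eq_notin k1A k2A); case: eqVneq => // _ [k2_in _].
  by rewrite k2_in in k2A.
split.
  move=> j1 j2 k _ /union_array_Some [kA1 ->] /union_array_Some [kA2].
  by move/(setU1_eq_notin kA1 kA2); rewrite eqxx; apply: subset_row_inj.
move=> j1 j2 k1 k2 _ ne /union_array_Some [kA1 ->] /union_array_Some [kA2].
move/(setU1_eq_notin kA1 kA2); case: eqVneq => [ek /subset_row_inj ej|_ [k2A1 k1A2]].
  by case: ne; rewrite ej ek.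
by rewrite /union_array k2A1 k1A2.
Qed.

End UnionArray.

Lemma exists_PDA_binomial (K t : nat) : 0 < t -> t < K ->
  exists R : 'I_'C(K, t) -> 'I_K -> option 'I_'C(K, t.+1),
    is_PDA 'C(K.-1, t.-1) R.
Proof.
move=> t_gt0 tK; set Q := [set A : {set 'I_K} | #|A| == t.+1].
have /card_gt0P [A0 QA0] : 0 < #|Q| by rewrite card_draws_ord bin_gt0.
pose code U := cast_ord (card_draws_ord K t.+1) (enum_rank_in QA0 U).
exists (fun j k => omap code (union_array j k)).
apply: (is_PDA_omap (@union_array_card K t)) (union_array_PDA K t_gt0).
move=> U V QU QV /cast_ord_inj e.
by rewrite -(enum_rankK_in QA0 QU) -(enum_rankK_in QA0 QV) e.
Qed.

Section LowerBound.
Local Open Scope ring_scope.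

Lemma mul_sub_le_sqr (R : realDomainType) (a g : R) : (2 * a - g) * g <= a ^+ 2.
Proof.
rewrite -subr_ge0; have -> : a ^+ 2 - (2 * a - g) * g = (g - a) ^+ 2 by ring.
exact: sqr_ge0.
Qed.

(* The right side is a convex quadratic in e and the left side its tangent at e = t. *)
Lemma quadratic_tangent_le (R : realDomainType) (t e L : R) :
  (L - t) * (t + 1) - (L + 1) * (e - t) <= (2 * t + 1 - e) * (L - e).
Proof.
rewrite -subr_ge0.
have -> : (2 * t + 1 - e) * (L - e) - ((L - t) * (t + 1) - (L + 1) * (e - t))
          = (e - t) ^+ 2 by ring.
exact: sqr_ge0.
Qed.

Variables (S : finType) (F K Z : nat) (R : 'I_F -> 'I_K -> option S).
Hypothesis R_PDA : is_PDA Z R.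

Let holes j := [set k | R j k == None].
Let occurrences s := [set p : 'I_F * 'I_K | R p.1 p.2 == Some s].

Lemma card_occurrences_le s j k :
  R j k = Some s -> (#|occurrences s| <= #|holes j|.+1)%N.
Proof.
move=> Rjk; have [_ [_ [col cross]]] := R_PDA.
have inj : {in occurrences s &, injective snd}.
  move=> [j1 k1] [j2 k2]; rewrite !inE /= => /eqP R1 /eqP R2 ek; subst k2.
  by rewrite (col _ _ _ _ R1 R2).
rewrite -(card_in_imset inj).
apply: (@leq_trans #|k |: holes j|); last by rewrite cardsU1 -add1n leq_add2r leq_b1.
apply/subset_leq_card/subsetP => _ /imsetP [[j' k'] occ' ->] /=; rewrite inE /= in occ'.
rewrite !inE; case: (eqVneq (j', k') (j, k)) => [[_ ->]|ne]; first by rewrite eqxx.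
by have [_ ->] := cross _ _ _ _ _ (elimN eqP ne) (eqP occ') Rjk; rewrite orbT.
Qed.

Lemma sum_occurrences (V : nmodType) (f : 'I_F * 'I_K -> V) :
  \sum_s \sum_(p in occurrences s) f p = \sum_(p | R p.1 p.2 != None) f p.
Proof.
rewrite (eq_bigr (fun s => \sum_p (if R p.1 p.2 == Some s then f p else 0))); last first.
  by move=> s _; rewrite big_mkcond; apply: eq_bigr => p _; rewrite inE.
rewrite exchange_big [RHS]big_mkcond; apply: eq_bigr => p _.
case: (R p.1 p.2) => [s0|] /=; last by rewrite big1.
by rewrite -big_mkcond (big_pred1 s0).
Qed.

Lemma sum_filled_cells (V : nmodType) (x : 'I_F -> V) :
  \sum_(p | R p.1 p.2 != None) x p.1 = \sum_j x j *+ (K - #|holes j|).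
Proof.
transitivity (\sum_j \sum_(k | R j k != None) x j).
  by rewrite pair_big_dep; apply: eq_bigl.
apply: eq_bigr => j _; rewrite sumr_const; congr (_ *+ _).
transitivity #|~: holes j|; first by apply: eq_card => k; rewrite !inE.
by rewrite cardsCs setCK card_ord.
Qed.

Lemma sum_card_holes : (\sum_j #|holes j| = K * Z)%N.
Proof.
have [card_holes _] := R_PDA.
have card_sum (T : finType) (P : pred T) : #|[set x | P x]| = (\sum_x P x)%N.
  by rewrite -sum1_card big_mkcond; apply: eq_bigr => x _; rewrite inE; case: (P x).
under eq_bigr do rewrite card_sum.
rewrite exchange_big /= (eq_bigr (fun _ => Z)) ?sum_nat_const ?card_ord // => k _.
by rewrite -(card_holes k) card_sum.
Qed.

Lemma sum_occurrence_weights_le (t : nat) s :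
  \sum_(p in occurrences s) (2 * t%:Z + 1 - #|holes p.1|%:Z) <= (t%:Z + 1) ^+ 2.
Proof.
set g := #|occurrences s|.
apply: (@le_trans _ _ (\sum_(p in occurrences s) (2 * t%:Z + 2 - g%:Z))).
  apply: ler_sum => [[j k]]; rewrite inE /= => /eqP /card_occurrences_le; rewrite /g.
  by move: #|occurrences s| #|holes j| => a b; lia.
rewrite sumr_const -/g -[_ *+ g]mulr_natr [g%:R]natz.
have -> : 2 * t%:Z + 2 = 2 * (t%:Z + 1) by ring.
exact: mul_sub_le_sqr.
Qed.

Lemma card_symbols_ge (t : nat) : (K * Z = t * F)%N -> (F * (K - t) <= t.+1 * #|S|)%N.
Proof.
move=> KZ; case: (leqP K t) => [/eqP ->|tK]; first by rewrite muln0.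
pose w j := 2 * t%:Z + 1 - #|holes j|%:Z.
have upper : \sum_j w j *+ (K - #|holes j|) <= (t%:Z + 1) ^+ 2 *+ #|S|.
  rewrite -sum_filled_cells -sum_occurrences -sumr_const.
  by apply: ler_sum => s _; apply: sum_occurrence_weights_le.
have lower : F%:Z * ((K%:Z - t%:Z) * (t%:Z + 1)) <= \sum_j w j *+ (K - #|holes j|).
  apply: (@le_trans _ _ (\sum_j ((K%:Z - t%:Z) * (t%:Z + 1)
                                  - (K%:Z + 1) * (#|holes j|%:Z - t%:Z)))).
    have sum_holes : \sum_j #|holes j|%:Z = (t * F)%:Z.
      by rewrite -KZ -sum_card_holes -[RHS]intz sumMz; apply: eq_bigr => j _; rewrite intz.
    rewrite sumrB -(mulr_sumr _ _ _ (K%:Z + 1)) sumrB sum_holes !sumr_const card_ord; lia.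
  apply: ler_sum => j _; rewrite /w -mulr_natr natrB; last first.
    by rewrite -[leqRHS](card_ord K) max_card.
  by rewrite [K%:R]natz [#|_|%:R]natz; apply: quadratic_tangent_le.
have key : (F * (K - t) * t.+1 <= t.+1 * #|S| * t.+1)%N.
  rewrite -lez_nat; have := le_trans lower upper.
  by rewrite subzn ?(ltnW tK) // expr2 -mulr_natr; lia.
by rewrite leq_pmul2r in key.
Qed.

End LowerBound.

Theorem mainTheorem11 (K t : nat) (Ht1 : 1 < t) (HtK : t < K) :
  is_min_PDA_size 'C(K, t) K 'C(K.-1, t.-1) ('C(K, t) * (K - t) %/ t.+1) /\
  'C(K, t) * (K - t) %/ t.+1 = 'C(K, t.+1) /\
  t.+1 %| 'C(K, t) * (K - t).
Proof.
have t_gt0 : 0 < t := ltnW Ht1.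
have binE : 'C(K, t) * (K - t) = t.+1 * 'C(K, t.+1) by rewrite mul_bin_left mulnC.
have divE : 'C(K, t) * (K - t) %/ t.+1 = 'C(K, t.+1) by rewrite binE mulKn.
rewrite divE binE dvdn_mulr //; split=> //; split.
  exact: exists_PDA_binomial.
move=> S R R_PDA; rewrite -(leq_pmul2l (ltn0Sn t)) -binE.
by apply: (card_symbols_ge R_PDA); rewrite mul_bin_diag prednK.
Qed.
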